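(* Let $s,r,R$ be positive integers with $s,r\ge 2$. If there is a non-trivial $R$-perfect code in $\mathbb F_q^{s\times r}$ with respect to the NRT metric, then $(R+1)(r+1)\le sr$.
   Context: $q$ is a prime power, $\mathbb F_q^{s\times r}$ the set of $s\times r$ matrices over $\mathbb F_q$ with rows in $\mathbb F_q^{1\times r}$. For a row $y=(y_1,\dots,y_r)$, the NRT weight is $w(y)=\max\{j: y_j\neq 0\}$ if $y\ne0$ and $w(0)=0$; for a matrix, $w(x)=\sum_i w(x_i)$. The NRT metric is $d(x,y)=w(x-y)$; $B(c,R)=\{x: d(x,c)\le R\}$. A code $C$ is $R$-perfect if the balls $B(c,R)$, $c\in C$, are pairwise disjoint and cover $\mathbb F_q^{s\times r}$; non-trivial means $|C|>1$ and $C\ne\mathbb F_q^{s\times r}$. *)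

From HB Require Import structures.
From mathcomp Require Import all_boot all_order all_algebra.
Set Implicit Arguments. Unset Strict Implicit. Unset Printing Implicit Defensive.
Import GRing.Theory.
Local Open Scope ring_scope.

(* NRT weight of a row y in F^{1 x r}: largest 1-based index j with y_j <> 0,
   and 0 for the zero row. Column index j : 'I_r corresponds to position j+1. *)
Definition nrt_row_weight (F : finFieldType) (r : nat) (y : 'rV[F]_r) : nat :=
  \max_(j < r | y 0 j != 0) j.+1.

Definition nrt_weight (F : finFieldType) (s r : nat) (x : 'M[F]_(s, r)) : nat :=
  \sum_(i < s) nrt_row_weight (row i x).

Definition nrt_dist (F : finFieldType) (s r : nat) (x y : 'M[F]_(s, r)) : nat :=
  nrt_weight (x - y).

Definition nrt_ball (F : finFieldType) (s r : nat) (c : 'M[F]_(s, r)) (R : nat)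
  : {set 'M[F]_(s, r)} := [set x | nrt_dist x c <= R]%N.

Definition nrt_perfect (F : finFieldType) (s r : nat) (C : {set 'M[F]_(s, r)})
  (R : nat) : Prop :=
  (forall c1 c2, c1 \in C -> c2 \in C -> c1 != c2 ->
     [disjoint nrt_ball c1 R & nrt_ball c2 R]) /\
  (forall x : 'M[F]_(s, r), exists2 c, c \in C & x \in nrt_ball c R).

Definition nontrivial_code (F : finFieldType) (s r : nat) (C : {set 'M[F]_(s, r)})
  : Prop := (1 < #|C|)%N /\ C != [set: 'M[F]_(s, r)].

From mathcomp Require Import all_boot all_order all_algebra.
From mathcomp Require Import zify.
Set Implicit Arguments. Unset Strict Implicit. Unset Printing Implicit Defensive.
Import GRing.Theory.

(* A difference of two distinct codewords of an R-perfect code is never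
   splittable: its rows cannot be divided into two groups each of NRT weight at
   most R, for otherwise the matrix agreeing with it on one group would lie in
   both balls. By perfection, for every y of weight > R the point c0 + y lies
   within distance R of a codeword c0 + z with z <> 0, so z is unsplittable,
   and each row weight of z is at most the maximum of those of y and y - z. If
   s <= R + 1, choose y with positive row weights summing to R + 1: then z is
   splittable. If s > R + 1 and (s - R - 1) r <= R, let y_a carry a 1 in the
   first column of each of the R + 1 rows a, ..., a + R; unsplittability forces
   y_a - z_a to vanish on these rows and to have full weight r on all the
   others. The codewords obtained for a = 0 and a = 1 then differ by a
   splittable matrix, hence coincide, which equates a row of weight 1 with a
   row of weight r >= 2. *)

Section Splittable.
Variable s : nat.
Implicit Types (g f b h : 'I_s -> nat) (P : pred 'I_s) (R : nat).

Definition splittable g R :=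
  exists P, \sum_(i | P i) g i <= R /\ \sum_(i | ~~ P i) g i <= R.

Lemma leq_sum_cond P g h :
  (forall i, P i -> g i <= h i) -> \sum_(i | P i) g i <= \sum_i h i.
Proof.
move=> le_gh; rewrite big_mkcond; apply: leq_sum => i _.
by case: ifP => // /le_gh.
Qed.

Lemma eq_of_leq_sum g h :
  (forall i, g i <= h i) -> \sum_i h i <= \sum_i g i -> forall i, g i = h i.
Proof.
move=> le_gh le_sum i; apply/eqP; rewrite eqn_leq le_gh leqNgt; apply/negP => lt_i.
suff : \sum_j g j < \sum_j h j by rewrite ltnNge le_sum.
rewrite (bigD1 i) // [X in _ < X](bigD1 i) //=.
by rewrite -addSn; apply: leq_add => //; apply: leq_sum => j _.
Qed.

Lemma sum_predC1 g i0 : \sum_i g i = g i0 + \sum_(i | i != i0) g i.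
Proof. exact: bigD1. Qed.

Lemma splittable_le g h R :
  (forall i, g i <= h i) -> splittable h R -> splittable g R.
Proof.
move=> le_gh [P [hP hNP]]; exists P.
by split; [apply: leq_trans hP | apply: leq_trans hNP]; apply: leq_sum => i _.
Qed.

Lemma splittable_sum_le g R : \sum_i g i <= R -> splittable g R.
Proof. by move=> le_gR; exists predT; split; rewrite // big_pred0. Qed.

Lemma splittable_pos b R :
  1 < s -> (forall i, 0 < b i) -> \sum_i b i = R.+1 -> splittable b R.
Proof.
move=> s_gt1 b_gt0 sum_b; pose i0 : 'I_s := Ordinal (ltnW s_gt1).
pose j0 : 'I_s := Ordinal s_gt1.
have le_i0 : b i0 <= R.
  by have := b_gt0 j0; rewrite (bigD1 i0) // (bigD1 j0) //= in sum_b; lia.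
exists (fun i => i == i0); rewrite big_pred1_eq; split => //.
by rewrite -(leq_add2l (b i0) _ R) -sum_predC1 sum_b; have := b_gt0 i0; lia.
Qed.

Lemma splittable_maxn b f g R i0 :
  \sum_i b i <= R.+1 -> \sum_i f i <= R -> (forall i, g i <= maxn (b i) (f i)) ->
  0 < b i0 <= f i0 -> splittable g R.
Proof.
move=> sum_b sum_f le_g /andP[b_i0 bf_i0]; exists (fun i => b i <= f i); split.
  by apply: leq_trans sum_f; apply: leq_sum_cond => i bf; have := le_g i; lia.
apply: (@leq_trans (\sum_(i | i != i0) b i)).
  rewrite big_mkcond [X in _ <= X]big_mkcond /=; apply: leq_sum => i _.
  case: ifPn => // fb; have -> : i != i0 by apply: contraNneq fb => ->.
  by have := le_g i; lia.
by rewrite -(leq_add2l (b i0) _ R) -sum_predC1; lia.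
Qed.

Lemma sum_interval a c : \sum_(i < s) ((a <= i) && (i < c) : nat) = minn c s - a.
Proof.
elim: s => [|n IHn]; first by rewrite big_ord0 minn0.
by rewrite big_ord_recr /= IHn; case: (leqP a n); case: (ltnP n c) => /=; lia.
Qed.

Lemma splittable_interval g R a c :
  (forall i : 'I_s, a <= i < c -> g i <= 1) ->
  \sum_(i : 'I_s | ~~ (a <= i < c)) g i <= R ->
  c - a + \sum_(i : 'I_s | ~~ (a <= i < c)) g i <= R + R ->
  splittable g R.
Proof.
move=> g_le1; set G := \sum_(i | _) _ => G_le sum_le.
(* One side: the rows outside [a, c) and the R - G first rows of [a, c). *)
pose t := a + (R - G).
exists (fun i => ~~ (t <= i < c)); split.
  apply: (@leq_trans (G + \sum_(i < s) ((a <= i) && (i < t) : nat))).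
    rewrite [X in X <= _]big_mkcond /G [X in _ <= X + _]big_mkcond -big_split /=.
    apply: leq_sum => i _; have := g_le1 i.
    by case: (leqP a i); case: (ltnP i c); case: (leqP t i) => /=; lia.
  by rewrite sum_interval; lia.
apply: (@leq_trans (\sum_(i < s) ((t <= i) && (i < c) : nat))).
  rewrite big_mkcond; apply: leq_sum => i _; rewrite negbK.
  by case: ifP => // /andP[t_i i_c]; apply: g_le1; apply/andP; split; lia.
by rewrite sum_interval; lia.
Qed.

Definition in_block a n (i : 'I_s) := a <= i < a + n.

Lemma sum_block a n : a + n <= s -> \sum_i (in_block a n i : nat) = n.
Proof. by move=> le_s; rewrite sum_interval; lia. Qed.

Lemma sum_off_block a n r :
  a + n <= s -> \sum_i (~~ in_block a n i) * r = (s - n) * r.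
Proof.
move=> le_s; rewrite -big_distrl /=; congr (_ * _).
apply/eqP; rewrite -(eqn_add2r n) subnK; last by lia.
rewrite -[X in _ + X == _](sum_block le_s) -big_split /=.
rewrite (eq_bigr (fun=> 1)) => [|i _]; last exact: addn_negb.
by rewrite sum_nat_const card_ord muln1.
Qed.

Lemma unsplittable_block g f R r a :
  a + R < s -> (forall i, f i <= r) -> \sum_i f i <= R -> (s - R.+1) * r <= R ->
  (forall i, g i <= maxn (in_block a R.+1 i) (f i)) -> ~ splittable g R ->
  forall i, f i = (~~ in_block a R.+1 i) * r.
Proof.
move=> lt_aR_s le_f_r sum_f off_le le_g unsplit.
have sum_b : \sum_i (in_block a R.+1 i : nat) <= R.+1 by rewrite sum_block ?addnS.
have f_block i : in_block a R.+1 i -> f i = 0.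
  move=> ib; apply/eqP; rewrite -leqn0 leqNgt; apply/negP => f_pos; apply: unsplit.
  by apply: (splittable_maxn (i0 := i) sum_b sum_f le_g); rewrite ib.
have le_g_off i : ~~ in_block a R.+1 i -> g i <= f i.
  by move=> /negbTE ib; have := le_g i; rewrite ib max0n.
have sum_fR : \sum_i f i = R.
  apply/eqP; rewrite eqn_leq sum_f leqNgt; apply/negP => lt_fR; apply: unsplit.
  have off_g : \sum_(i | ~~ in_block a R.+1 i) g i <= \sum_i f i by exact: leq_sum_cond.
  apply: (splittable_interval (a := a) (c := a + R.+1)) => [i ib||].
  - by have := le_g i; rewrite (f_block i ib) /in_block ib maxn0.
  - exact: leq_trans off_g sum_f.
  - rewrite addKn; apply: leq_trans (leq_add (leqnn R.+1) off_g) _; lia.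
apply: eq_of_leq_sum => [i|]; last by rewrite sum_off_block ?addnS ?sum_fR.
by case: (boolP (in_block a R.+1 i)) => [/f_block ->|_]; rewrite ?mul1n.
Qed.

Lemma sum_minn_subn_mul c n : \sum_(i < s) minn c (n - i * c) = minn n (s * c).
Proof.
elim: s => [|k IHk]; first by rewrite big_ord0 mul0n minn0.
by rewrite big_ord_recr /= IHk; nia.
Qed.

Lemma exists_composition m r :
  s <= m <= s * r -> exists b, (forall i, 0 < b i <= r) /\ \sum_i b i = m.
Proof.
move=> /andP[le_s_m le_m_sr].
exists (fun i => 1 + minn (r - 1) (m - s - i * (r - 1))); split => [i|].
  by have := ltn_ord i; nia.
by rewrite big_split /= sum_minn_subn_mul sum_nat_const card_ord muln1; nia.
Qed.

End Splittable.

Section NRTCodes.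
Variables (F : finFieldType) (s r : nat).
Local Notation M := 'M[F]_(s, r).
Implicit Types (A B c y z : M) (C : {set M}) (P : pred 'I_s) (R : nat).

Definition row_weight A (i : 'I_s) := nrt_row_weight (row i A).

Lemma row_weight_leP A i t :
  row_weight A i <= t <-> (forall k : 'I_r, t <= k -> A i k = 0%R).
Proof.
rewrite /row_weight /nrt_row_weight; split.
  move/bigmax_leqP => le_t k le_tk; apply/eqP; apply: contraTT le_tk => nz.
  by rewrite -ltnNge; apply: le_t; rewrite mxE.
move=> vanish; apply/bigmax_leqP => k; rewrite mxE => nz.
by rewrite leqNgt ltnS; apply: contra nz => le_tk; apply/eqP; apply: vanish.
Qed.

Lemma row_weight_gt A i (k : 'I_r) : A i k != 0%R -> k < row_weight A i.
Proof. by move=> nz; apply: leq_bigmax_cond; rewrite mxE. Qed.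

Lemma eq_row_weight A B i j :
  (forall k, (A i k != 0%R) = (B j k != 0%R)) -> row_weight A i = row_weight B j.
Proof. by move=> eq_nz; apply: eq_bigl => k; rewrite !mxE eq_nz. Qed.

Lemma row_weightN A i : row_weight (- A) i = row_weight A i.
Proof. by apply: eq_row_weight => k; rewrite mxE oppr_eq0. Qed.

Lemma row_weightD A B i :
  row_weight (A + B) i <= maxn (row_weight A i) (row_weight B i).
Proof.
apply/row_weight_leP => k; rewrite geq_max => /andP[le_A le_B].
have /row_weight_leP vA := leqnn (row_weight A i).
have /row_weight_leP vB := leqnn (row_weight B i).
by rewrite mxE vA // vB // addr0.
Qed.

Lemma row_weightB A B i :
  row_weight (A - B) i <= maxn (row_weight A i) (row_weight B i).
Proof. by rewrite -(row_weightN B); apply: row_weightD. Qed.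

Lemma row_weight_le A i : row_weight A i <= r.
Proof. by apply/row_weight_leP => k; rewrite leqNgt ltn_ord. Qed.

Lemma row_weight_eq0 A i : row_weight A i = 0 -> forall k, A i k = 0%R.
Proof. by move=> w0 k; apply: (proj1 (row_weight_leP A i 0)); rewrite ?w0. Qed.

Lemma eq_entry_of_row_weightB0 A B i :
  row_weight (A - B) i = 0 -> forall k, B i k = A i k.
Proof.
by move/row_weight_eq0 => AB0 k; apply/esym/eqP; rewrite -subr_eq0 -(AB0 k) !mxE.
Qed.

Lemma nrt_weightE A : nrt_weight A = \sum_i row_weight A i.
Proof. by []. Qed.

Lemma nrt_weightN A : nrt_weight (- A) = nrt_weight A.
Proof. by rewrite !nrt_weightE; apply: eq_bigr => i _; apply: row_weightN. Qed.

Definition row_restrict (P : pred 'I_s) A : M :=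
  \matrix_(i, k) (if P i then A i k else 0%R).

Lemma nrt_weight_restrict P A :
  nrt_weight (row_restrict P A) = \sum_(i | P i) row_weight A i.
Proof.
rewrite nrt_weightE [RHS]big_mkcond; apply: eq_bigr => i _; case: ifP => Pi.
  by apply: eq_row_weight => k; rewrite mxE Pi.
by apply/eqP; rewrite -leqn0; apply/row_weight_leP => k _; rewrite mxE Pi.
Qed.

Lemma row_restrictC P A : (A - row_restrict P A)%R = row_restrict (predC P) A.
Proof. by apply/matrixP => i k; rewrite !mxE /=; case: (P i); rewrite ?subrr ?subr0. Qed.

Lemma perfect_eq_of_splittable C R c1 c2 :
  nrt_perfect C R -> c1 \in C -> c2 \in C ->
  splittable (row_weight (c1 - c2)) R -> c1 = c2.
Proof.
move=> [disj _] c1C c2C [P [le_P le_NP]]; apply/eqP; apply: contraT => ne.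
set z := (c1 - c2)%R in le_P le_NP; set x := row_restrict P z.
have in2 : (c2 + x)%R \in nrt_ball c2 R.
  by rewrite inE /nrt_dist addrC addKr nrt_weight_restrict.
have in1 : (c2 + x)%R \in nrt_ball c1 R.
  rewrite inE /nrt_dist; have -> : (c2 + x - c1 = - (z - x))%R.
    by rewrite /z !opprB addrA [(x + c2)%R]addrC.
  by rewrite nrt_weightN row_restrictC nrt_weight_restrict.
by rewrite (disjointFr (disj _ _ c1C c2C ne) in1) in in2.
Qed.

Lemma perfect_cover C R c0 y :
  nrt_perfect C R -> c0 \in C -> R < nrt_weight y ->
  exists2 c, c \in C &
    nrt_weight (y - (c - c0)) <= R /\ ~ splittable (row_weight (c - c0)) R.
Proof.
move=> perf c0C lt_Ry; have [c cC] := perf.2 (c0 + y)%R.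
rewrite inE /nrt_dist => near_c; exists c => //.
have -> : (y - (c - c0) = c0 + y - c)%R by rewrite opprB addrA [(y + c0)%R]addrC.
split => // split_c.
move: near_c; rewrite (perfect_eq_of_splittable perf cC c0C split_c).
by rewrite addrC addKr; lia.
Qed.

Definition unit_rows (b : 'I_s -> nat) : M :=
  \matrix_(i, k) (if k.+1 == b i then 1 else 0)%R.

Lemma row_weight_unit_rows b i : b i <= r -> row_weight (unit_rows b) i = b i.
Proof.
move=> le_br; apply/eqP; rewrite eqn_leq; apply/andP; split.
  apply/row_weight_leP => k le_bk; rewrite mxE; case: eqP => // kb.
  by move: le_bk; rewrite -kb ltnn.
case: (posnP (b i)) => [-> //|b_pos]; have lt_br : (b i).-1 < r by lia.
have := @row_weight_gt (unit_rows b) i (Ordinal lt_br).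
by rewrite mxE /= prednK // eqxx oner_eq0 => /(_ isT); lia.
Qed.

Lemma nrt_weight_unit_rows b :
  (forall i, b i <= r) -> nrt_weight (unit_rows b) = \sum_i b i.
Proof. by move=> le_br; apply: eq_bigr => i _; apply: row_weight_unit_rows. Qed.

Lemma row_weight_le_maxn y z i :
  row_weight z i <= maxn (row_weight y i) (row_weight (y - z) i).
Proof. by rewrite -{1}(subKr y z); apply: row_weightB. Qed.

Lemma nrt_weight_le A : nrt_weight A <= s * r.
Proof.
have : \sum_i row_weight A i <= \sum_(i < s) r.
  by apply: leq_sum => i _; apply: row_weight_le.
by rewrite sum_nat_const card_ord.
Qed.

Lemma perfect_code_trivial C R c1 c2 :
  s * r <= R -> nrt_perfect C R -> c1 \in C -> c2 \in C -> c1 = c2.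
Proof.
move=> le_sr perf c1C c2C; apply: (perfect_eq_of_splittable perf c1C c2C).
exact/splittable_sum_le/(leq_trans (nrt_weight_le _)).
Qed.

Lemma perfect_code_few_rows C R c0 :
  1 < s -> s <= R.+1 -> nrt_perfect C R -> c0 \in C -> s * r <= R.
Proof.
move=> s_gt1 le_sR perf c0C; rewrite leqNgt; apply/negP => lt_R_sr.
have [b [b_bound sum_b]] := @exists_composition s R.+1 r ltac:(by rewrite le_sR).
have b_gt0 i : 0 < b i by case/andP: (b_bound i).
have le_br i : b i <= r by case/andP: (b_bound i).
have [c cC [near_c unsplit]] := @perfect_cover C R c0 (unit_rows b) perf c0C
  ltac:(by rewrite nrt_weight_unit_rows // sum_b).
apply: unsplit; set e := (unit_rows b - (c - c0))%R in near_c.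
have le_g i : row_weight (c - c0) i <= maxn (b i) (row_weight e i).
  by rewrite -(row_weight_unit_rows (le_br i)); apply: row_weight_le_maxn.
have [/existsP[i le_bi]|/existsPn lt_b] := boolP [exists i, b i <= row_weight e i].
  by apply: (splittable_maxn (i0 := i) _ near_c le_g); rewrite ?sum_b ?b_gt0.
apply: (splittable_le (h := b)) => [i|]; first by have := le_g i; have := lt_b i; lia.
exact: splittable_pos.
Qed.

(* Row [i] has a single 1, in the first column, exactly when [in_block a n i]. *)
Definition block_rows a n : M := unit_rows (fun i => in_block a n i : nat).

Lemma perfect_block_codeword C R c0 a :
  0 < r -> a + R < s -> (s - R.+1) * r <= R -> nrt_perfect C R -> c0 \in C ->
  exists2 c, c \in C & forall i,
    row_weight (block_rows a R.+1 - (c - c0)) i = (~~ in_block a R.+1 i) * r.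
Proof.
move=> r_gt0 lt_aR_s off_le perf c0C.
have le_br (i : 'I_s) : (in_block a R.+1 i : nat) <= r.
  exact: leq_trans (leq_b1 _) r_gt0.
have [c cC [near_c unsplit]] := @perfect_cover C R c0 (block_rows a R.+1) perf c0C
  ltac:(by rewrite nrt_weight_unit_rows // sum_block ?addnS).
exists c => //.
apply: (unsplittable_block lt_aR_s (row_weight_le _) near_c off_le _ unsplit) => i.
have := row_weight_le_maxn (block_rows a R.+1) (c - c0)%R i.
by rewrite row_weight_unit_rows.
Qed.

Lemma perfect_code_many_rows C R c0 :
  1 < r -> R.+1 < s -> nrt_perfect C R -> c0 \in C -> R < (s - R.+1) * r.
Proof.
move=> r_gt1 lt_R_s perf c0C; rewrite ltnNge; apply/negP => off_le.
have r_gt0 : 0 < r by lia.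
have [c_0 c_0C w_0] :=
  perfect_block_codeword (a := 0) r_gt0 (ltnW lt_R_s) off_le perf c0C.
have [c_1 c_1C w_1] := perfect_block_codeword (a := 1) r_gt0 lt_R_s off_le perf c0C.
have z_0 i k : in_block 0 R.+1 i -> (c_0 - c0)%R i k = block_rows 0 R.+1 i k.
  by move=> ib; apply: eq_entry_of_row_weightB0; rewrite w_0 ib.
have z_1 i k : in_block 1 R.+1 i -> (c_1 - c0)%R i k = block_rows 1 R.+1 i k.
  by move=> ib; apply: eq_entry_of_row_weightB0; rewrite w_1 ib.
pose j : 'I_s := Ordinal lt_R_s.
have c_0_c_1 : c_0 = c_1.
  apply: (perfect_eq_of_splittable perf c_0C c_1C).
  have -> : (c_0 - c_1 = (c_0 - c0) - (c_1 - c0))%R by rewrite opprB addrA subrK.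
  exists (fun i => ~~ in_block 1 R.+1 i); split.
    apply: leq_trans (leq_sum_cond (h := fun i => (~~ in_block 1 R.+1 i) * r) _) _.
      by move=> i ->; rewrite mul1n row_weight_le.
    by rewrite sum_off_block.
  (* Rows 1..R lie in both blocks, so there the two differences agree. *)
  apply: leq_trans (leq_sum_cond (h := fun i => (i == j) * r) _) _.
    move=> i; rewrite negbK => ib1; have [->|ne_ij] := eqVneq i j.
      by rewrite mul1n row_weight_le.
    have ib0 : in_block 0 R.+1 i.
      by move: ib1 ne_ij; rewrite /in_block -val_eqE /=; lia.
    rewrite mul0n; apply/row_weight_leP => k _.
    by rewrite mxE z_0 // [X in (_ + X)%R]mxE z_1 // !mxE ib0 ib1 subrr.
  by rewrite (bigD1 j) //= eqxx mul1n big1 ?addn0 => [|i /negbTE ->]; nia.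
pose o : 'I_s := Ordinal (leq_ltn_trans (leq0n R.+1) lt_R_s).
have w_o : row_weight (block_rows 1 R.+1 - (c_0 - c0)) o = r.
  by rewrite c_0_c_1 w_1 /= mul1n.
have : row_weight (block_rows 1 R.+1 - (c_0 - c0)) o = row_weight (block_rows 0 R.+1) o.
  apply: eq_row_weight => k; rewrite mxE [X in (_ + X)%R]mxE z_0 //.
  by rewrite [block_rows 1 _ _ _]mxE /= add0r oppr_eq0.
by rewrite w_o row_weight_unit_rows //=; lia.
Qed.

End NRTCodes.

Theorem mainTheorem10 (F : finFieldType) (s r R : nat) :
  (2 <= s)%N -> (2 <= r)%N -> (0 < R)%N ->
  (exists C : {set 'M[F]_(s, r)}, nontrivial_code C /\ nrt_perfect C R) ->
  ((R.+1) * (r.+1) <= s * r)%N.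
Proof.
move=> s_gt1 r_gt1 _ [C [[card_C _] perf]].
have [c1 [c2 [c1C c2C ne_c]]] := card_gt1P card_C.
have lt_R_sr : R < s * r.
  rewrite ltnNge; apply: contraNN ne_c => le_sr.
  by apply/eqP; apply: perfect_code_trivial perf c1C c2C.
have [le_s_R | lt_R_s] := leqP s R.+1.
  by have := perfect_code_few_rows s_gt1 le_s_R perf c1C; lia.
by have := perfect_code_many_rows r_gt1 lt_R_s perf c1C; nia.
Qed.
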